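(* For $0<q<1$, $$\log\tilde\Gamma(q)=-\log q+\tilde\gamma_0\, q+\sum_{k=2}^\infty\frac{(-1)^{k-1}\zeta_E(k)}{k}\,q^k,$$ where $\tilde\Gamma(q)=\frac1q e^{\tilde\gamma_0 q}\prod_{k=1}^\infty\left(e^{-\frac qk}\left(1+\frac qk\right)\right)^{(-1)^{k+1}}$.
   Context: $\zeta_E(z)=\sum_{n=1}^\infty(-1)^{n+1}n^{-z}$ (alternating zeta function, continued analytically in $z$). For $q>0$, $\zeta_E(z,q)=\sum_{n=0}^\infty (-1)^n (n+q)^{-z}$ for $\mathrm{Re}(z)>0$, extended analytically; the modified Stieltjes constants $\tilde\gamma_k(q)$ are defined by $\zeta_E(z,q)=\sum_{k\ge0}\frac{(-1)^k\tilde\gamma_k(q)}{k!}(z-1)^k$, and $\tilde\gamma_0:=\tilde\gamma_0(1)=\zeta_E(1)$. The modified gamma function $\tilde\Gamma$ is the function given by the product above for $q>0$; it satisfies $\frac{d}{dq}\log\tilde\Gamma(q)=-\zeta_E(1,q)$. *)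

From Stdlib Require Import Reals.
From Coquelicot Require Import Coquelicot.
Open Scope R_scope.

(* zeta_E(s) = sum_{n>=1} (-1)^(n+1) n^(-s), for a natural exponent s >= 1
   (series convergent; at s = 1 only conditionally, Series = limit of partial sums). *)
Definition zetaE (s : nat) : R :=
  Series (fun n : nat => (-1) ^ n / (INR (n + 1)) ^ s).

Definition gamma0t : R := zetaE 1.

Definition tGamma_factor (q : R) (k : nat) : R :=
  let f := exp (- (q / INR k)) * (1 + q / INR k) in
  if Nat.odd k then f else / f.

Fixpoint tGamma_pprod (q : R) (N : nat) : R :=
  match N with
  | O => 1
  | S N' => tGamma_pprod q N' * tGamma_factor q (S N')
  end.

Definition tGamma_prod (q : R) : R := real (Lim_seq (tGamma_pprod q)).

Definition tGamma (q : R) : R := / q * exp (gamma0t * q) * tGamma_prod q.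

From Stdlib Require Import Reals Lra Lia.
From Coquelicot Require Import Coquelicot.
Open Scope R_scope.

(** Taking logarithms, the k-th factor of the product contributes
    (-1)^(k+1) (ln(1 + q/k) - q/k) = sum_(n>=2) (-1)^(n+1) (-1)^(k+1) (q/k)^n / n.
    Summing over k and exchanging the two summations yields
    sum_(n>=2) (-1)^(n+1) zeta_E(n) q^n / n.  The exchange is justified because the
    tail of zeta_E(n) beyond N is O(1/N) uniformly in n >= 2, while the n-series is
    dominated by the geometric series q^n.  Hence the partial products converge to the
    exponential of this sum, and the prefactor (1/q) e^(gamma_0 q) adds -ln q + gamma_0 q. *)

Lemma is_lim_seq_abs_sub_le (u e : nat -> R) (l : R) :
  (forall n, Rabs (u n - l) <= e n) -> is_lim_seq e 0 -> is_lim_seq u l.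
Proof.
  intros hle he.
  apply is_lim_seq_le_le with (fun n => l - e n) (fun n => l + e n).
  - intro n; specialize (hle n); apply Rabs_le_between in hle; lra.
  - replace (Finite l) with (Finite (l - 0)) by (f_equal; ring).
    exact (is_lim_seq_minus' _ _ _ _ (is_lim_seq_const l) he).
  - replace (Finite l) with (Finite (l + 0)) by (f_equal; ring).
    exact (is_lim_seq_plus' _ _ _ _ (is_lim_seq_const l) he).
Qed.

Definition ln1p_term (m : nat) (y : R) : R := (-1) ^ m * y ^ (m + 1) / INR (m + 1).

Lemma is_derive_ln1p_term (m : nat) (y : R) : is_derive (ln1p_term m) y ((- y) ^ m).
Proof.
  unfold ln1p_term; auto_derive; [easy|].
  rewrite Nat.add_1_r; simpl pred.
  replace (- y) with (-1 * y) by ring.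
  rewrite Rpow_mult_distr. field. apply not_0_INR. lia.
Qed.

Lemma sum_n_pow_opp (y : R) (M : nat) : y <> -1 ->
  sum_n (fun m => (- y) ^ m) M = (1 - (- y) ^ S M) / (1 + y).
Proof.
  intro hy. rewrite sum_n_Reals, tech3 by lra.
  now replace (1 - - y) with (1 + y) by ring.
Qed.

Lemma ln1p_sub_sum_n_bound (x : R) (M : nat) : Rabs x < 1 ->
  Rabs (ln (1 + x) - sum_n (fun m => ln1p_term m x) M) <= Rabs x ^ S M / (1 - Rabs x).
Proof.
  intro hx.
  set (g := fun y => ln (1 + y) - sum_n (fun m => ln1p_term m y) M).
  set (dg := fun c => (- c) ^ S M / (1 + c)).
  assert (hdg : forall c, Rabs (c - 0) <= Rabs x -> is_derive g c (dg c)).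
  { intros c hc. rewrite Rminus_0_r in hc. apply Rabs_le_between in hc.
    assert (hc1 : 0 < 1 + c) by lra.
    replace (dg c) with (/ (1 + c) * 1 - sum_n (fun m => (- c) ^ m) M).
    - apply (is_derive_minus (fun y => ln (1 + y))
                             (fun y => sum_n (fun m => ln1p_term m y) M)).
      + auto_derive; [lra | ring].
      + apply (is_derive_sum_n ln1p_term M c (fun m => (- c) ^ m)).
        intros m _; apply is_derive_ln1p_term.
    - rewrite sum_n_pow_opp by lra. unfold dg. field. lra. }
  destruct (MVT_cor4 g dg 0 (Rabs x) hdg x) as [c [hgc hc]].
  { rewrite Rminus_0_r; lra. }
  replace (x - 0) with x in hgc, hc by ring. replace (c - 0) with c in hc by ring.
  assert (hg0 : g 0 = 0).
  { unfold g. rewrite Rplus_0_r, ln_1, (sum_n_ext _ (fun _ => 0)).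
    - rewrite sum_n_const; ring.
    - intro m. unfold ln1p_term, Rdiv. rewrite pow_i by lia.
      now rewrite Rmult_0_r, Rmult_0_l. }
  change (Rabs (g x) <= Rabs x ^ S M / (1 - Rabs x)).
  rewrite hg0, Rminus_0_r in hgc. rewrite hgc. unfold dg.
  apply Rabs_le_between in hc as hc'.
  assert (h0x : 0 <= Rabs x) by apply Rabs_pos.
  rewrite Rabs_mult, Rabs_div, <- RPow_abs, Rabs_Ropp, (Rabs_right (1 + c)) by lra.
  rewrite <- (Rmult_1_r (Rabs x ^ S M / (1 - Rabs x))).
  apply Rmult_le_compat; [| apply Rabs_pos | | lra].
  - apply Rmult_le_pos; [apply pow_le, Rabs_pos | apply Rlt_le, Rinv_0_lt_compat; lra].
  - apply Rmult_le_compat.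
    + apply pow_le, Rabs_pos.
    + apply Rlt_le, Rinv_0_lt_compat; lra.
    + apply pow_incr; split; [apply Rabs_pos | exact hc].
    + apply Rinv_le_contravar; lra.
Qed.

Lemma is_series_ln1p (x : R) : Rabs x < 1 -> is_series (fun m => ln1p_term m x) (ln (1 + x)).
Proof.
  intro hx.
  apply (is_lim_seq_abs_sub_le _ (fun M => Rabs x ^ S M / (1 - Rabs x))).
  - intro M. rewrite Rabs_minus_sym. now apply ln1p_sub_sum_n_bound.
  - replace 0 with (0 * / (1 - Rabs x)) by ring.
    apply (is_lim_seq_scal_r (fun M => Rabs x ^ S M) _ 0).
    apply (is_lim_seq_incr_1 (pow (Rabs x))), is_lim_seq_geom.
    now rewrite Rabs_Rabsolu.
Qed.

Lemma is_series_ln1p_shift (x : R) : Rabs x < 1 ->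
  is_series (fun n => ln1p_term (S n) x) (ln (1 + x) - x).
Proof.
  intro hx. apply (is_series_incr_1 (fun m => ln1p_term m x)).
  replace (plus _ _) with (ln (1 + x)) by (unfold plus, ln1p_term; simpl; field).
  now apply is_series_ln1p.
Qed.

Lemma ln1p_term_succ_abs_le (n : nat) (x : R) : Rabs x <= 1 ->
  Rabs (ln1p_term (S n) x) <= Rabs x ^ n.
Proof.
  intro hx. unfold ln1p_term.
  assert (hn : 1 <= INR (S n + 1)) by (apply (le_INR 1); lia).
  rewrite Rabs_div, Rabs_mult, pow_1_abs, Rmult_1_l, <- RPow_abs, (Rabs_right (INR _)) by lra.
  assert (0 <= Rabs x) by apply Rabs_pos.
  assert (hp : Rabs x ^ (S n + 1) <= Rabs x ^ n).
  { replace (S n + 1)%nat with (n + 2)%nat by lia. rewrite pow_add.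
    rewrite <- (Rmult_1_r (Rabs x ^ n)) at 2. apply Rmult_le_compat_l; [now apply pow_le|].
    simpl. nra. }
  assert (0 <= Rabs x ^ (S n + 1)) by now apply pow_le.
  unfold Rdiv. apply Rle_trans with (Rabs x ^ (S n + 1)); [|exact hp].
  rewrite <- (Rmult_1_r (Rabs x ^ (S n + 1))) at 2.
  apply Rmult_le_compat_l; [lra|]. rewrite <- Rinv_1. apply Rinv_le_contravar; lra.
Qed.

Lemma is_lim_seq_inv_INR_add (N : nat) : is_lim_seq (fun K => / INR (K + N)) 0.
Proof.
  assert (hinf : is_lim_seq (fun K => INR (K + N)) p_infty).
  { now apply (is_lim_seq_incr_n INR N p_infty), is_lim_seq_INR. }
  exact (is_lim_seq_inv _ _ hinf ltac:(discriminate)).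
Qed.

Lemma is_series_inv_consecutive_mul (N : nat) :
  is_series (fun k => / (INR (N + k + 1) * INR (N + k + 2))) (/ INR (N + 1)).
Proof.
  assert (hN : 0 < INR (N + 1)) by (apply lt_0_INR; lia).
  apply (is_lim_seq_ext (fun K => / INR (N + 1) - / INR (K + (N + 2))) _ (/ INR (N + 1))).
  - induction n as [|K IH].
    + rewrite sum_O, !plus_INR. simpl INR.
      pose proof (pos_INR N). field. lra.
    + rewrite sum_Sn, <- IH. change (plus ?x ?y) with (x + y).
      replace (N + S K + 1)%nat with (K + (N + 2))%nat by lia.
      replace (N + S K + 2)%nat with (S (K + (N + 2))) by lia.
      replace (S K + (N + 2))%nat with (S (K + (N + 2))) by lia.
      rewrite S_INR.
      assert (0 < INR (K + (N + 2))) by (apply lt_0_INR; lia).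
      field. lra.
  - replace (Finite (/ INR (N + 1))) with (Finite (/ INR (N + 1) - 0)) by (f_equal; ring).
    apply is_lim_seq_minus'; [apply is_lim_seq_const | apply is_lim_seq_inv_INR_add].
Qed.

Lemma Series_sub_sum_n_abs_le (a b : nat -> R) (N : nat) :
  (forall k, Rabs (a k) <= b k) -> ex_series b ->
  Rabs (Series a - sum_n a N) <= Series (fun k => b (S N + k)%nat).
Proof.
  intros hab hb.
  assert (hbN : ex_series (fun k => b (S N + k)%nat)) by now apply ex_series_incr_n.
  assert (haN : ex_series (fun k => Rabs (a (S N + k)%nat))).
  { apply (@ex_series_le R_AbsRing R_CompleteNormedModule _ (fun k => b (S N + k)%nat));
      [|exact hbN].
    intro k. change (Rabs (Rabs (a (S N + k)%nat)) <= b (S N + k)%nat).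
    rewrite Rabs_Rabsolu; apply hab. }
  assert (htail : is_series (fun k => a (S N + k)%nat) (Series a - sum_n a N)).
  { apply is_series_incr_n; [lia|]. simpl pred.
    replace (plus _ _) with (Series a)
      by (change (plus ?x ?y) with (x + y); rewrite Rplus_comm; apply eq_sym, Rplus_minus).
    apply Series_correct, (@ex_series_le R_AbsRing R_CompleteNormedModule _ b); [|exact hb].
    intro k; apply hab. }
  rewrite <- (is_series_unique _ _ htail).
  eapply Rle_trans; [now apply Series_Rabs|].
  apply Series_le; [|exact hbN].
  intro k; split; [apply Rabs_pos | apply hab].
Qed.

Lemma is_series_sum_n (a : nat -> nat -> R) (l : nat -> R) (N : nat) :
  (forall j, is_series (a j) (l j)) ->
  is_series (fun n => sum_n (fun j => a j n) N) (sum_n l N).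
Proof.
  intro ha. induction N as [|N IH].
  - rewrite sum_O. apply (is_series_ext (a 0%nat)); [|apply ha].
    intro n; now rewrite sum_O.
  - rewrite sum_Sn. apply (is_series_ext (fun n => plus (sum_n (fun j => a j n) N) (a (S N) n))).
    + intro n; now rewrite sum_Sn.
    + exact (is_series_plus _ _ _ _ IH (ha (S N))).
Qed.

Lemma Series_uniform_approx (f : nat -> nat -> R) (g w e : nat -> R) :
  (forall N, ex_series (f N)) -> ex_series w ->
  (forall N n, Rabs (f N n - g n) <= e N * w n) -> is_lim_seq e 0 ->
  ex_series g /\ is_lim_seq (fun N => Series (f N)) (Series g).
Proof.
  intros hf hw hfg he.
  assert (hdiff : forall N, ex_series (fun n => f N n - g n)).
  { intro N. apply (@ex_series_le R_AbsRing R_CompleteNormedModule _ (fun n => e N * w n)).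
    - apply hfg.
    - exact (ex_series_scal_l (e N) w hw). }
  assert (hg : ex_series g).
  { apply (ex_series_ext (fun n => f 0%nat n - (f 0%nat n - g n))).
    - intro n. change (f 0%nat n - (f 0%nat n - g n) = g n). ring.
    - exact (ex_series_minus _ _ (hf 0%nat) (hdiff 0%nat)). }
  split; [exact hg|].
  apply (is_lim_seq_abs_sub_le _ (fun N => e N * Series w)).
  - intro N. rewrite <- Series_minus, <- Series_scal_l by easy.
    eapply Rle_trans; [apply Series_Rabs | apply Series_le].
    + apply (@ex_series_le R_AbsRing R_CompleteNormedModule _ (fun n => e N * w n)).
      * intro n. rewrite Rabs_Rabsolu. apply hfg.
      * exact (ex_series_scal_l (e N) w hw).
    + intro n; split; [apply Rabs_pos | apply hfg].
    + exact (ex_series_scal_l (e N) w hw).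
  - replace 0 with (0 * Series w) by ring. exact (is_lim_seq_scal_r e _ 0 he).
Qed.

Definition zetaE_term (s n : nat) : R := (-1) ^ n / INR (n + 1) ^ s.

Lemma zetaE_term_abs_le (s k : nat) : (2 <= s)%nat ->
  Rabs (zetaE_term s k) <= 2 * / (INR (k + 1) * INR (k + 2)).
Proof.
  intro hs. unfold zetaE_term.
  replace (INR (k + 2)) with (INR (k + 1) + 1) by (rewrite <- S_INR; f_equal; lia).
  set (u := INR (k + 1)).
  assert (hu : 1 <= u) by (apply (le_INR 1); lia).
  assert (hus : 0 < u ^ s) by (apply pow_lt; lra).
  rewrite Rabs_div, pow_1_abs, (Rabs_right (u ^ s)) by (apply Rgt_not_eq || idtac; lra).
  assert (hpow : u ^ 2 <= u ^ s) by (apply Rle_pow; [lra | exact hs]).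
  apply Rle_trans with (/ u ^ 2).
  - unfold Rdiv. rewrite Rmult_1_l. apply Rinv_le_contravar; [nra | exact hpow].
  - apply Rle_trans with (/ (u * (u + 1) / 2)).
    + apply Rinv_le_contravar; nra.
    + right. field. lra.
Qed.

Lemma zetaE_sub_sum_n_abs_le (s N : nat) : (2 <= s)%nat ->
  Rabs (zetaE s - sum_n (zetaE_term s) N) <= 2 / INR (N + 2).
Proof.
  intro hs.
  set (b := fun k => 2 * / (INR (k + 1) * INR (k + 2))).
  assert (hb : forall M, is_series (fun k => b (M + k)%nat) (2 * / INR (M + 1))).
  { intro M. apply (is_series_scal_l 2 (fun k => / (INR (M + k + 1) * INR (M + k + 2)))).
    apply is_series_inv_consecutive_mul. }
  eapply Rle_trans.
  - apply (Series_sub_sum_n_abs_le _ b); [intro k; now apply zetaE_term_abs_le|].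
    eexists. exact (hb 0%nat).
  - rewrite (is_series_unique _ _ (hb (S N))).
    replace (S N + 1)%nat with (N + 2)%nat by lia. unfold Rdiv. lra.
Qed.

Lemma pow_neg1_odd_succ (j : nat) : (-1) ^ j = if Nat.odd (S j) then 1 else -1.
Proof.
  rewrite Nat.odd_succ. induction j as [|j IH]; [reflexivity|].
  rewrite Nat.even_succ, <- Nat.negb_even. simpl pow. rewrite IH.
  destruct (Nat.even j); simpl; ring.
Qed.

Section LogFactors.

Variable q : R.
Hypothesis hq : Rabs q < 1.

Definition log_tGamma_factor (j : nat) : R :=
  (-1) ^ j * (ln (1 + q / INR (S j)) - q / INR (S j)).

Lemma abs_div_succ_lt (j : nat) : Rabs (q / INR (S j)) < 1.
Proof.
  assert (hj : 1 <= INR (S j)) by (apply (le_INR 1); lia).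
  rewrite Rabs_div, (Rabs_right (INR _)) by lra.
  apply (Rmult_lt_reg_r (INR (S j))); [lra|].
  unfold Rdiv. rewrite Rmult_assoc, Rinv_l by lra.
  pose proof (Rabs_pos q). nra.
Qed.

Lemma tGamma_factor_succ (j : nat) : tGamma_factor q (S j) = exp (log_tGamma_factor j).
Proof.
  unfold tGamma_factor, log_tGamma_factor.
  assert (hx := abs_div_succ_lt j). apply Rabs_def2 in hx.
  assert (hf : exp (- (q / INR (S j))) * (1 + q / INR (S j))
               = exp (ln (1 + q / INR (S j)) - q / INR (S j))).
  { unfold Rminus. rewrite exp_plus, exp_ln by lra. ring. }
  rewrite hf, pow_neg1_odd_succ. destruct (Nat.odd (S j)).
  - f_equal. ring.
  - rewrite <- exp_Ropp. f_equal. ring.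
Qed.

Lemma tGamma_pprod_succ (N : nat) : tGamma_pprod q (S N) = exp (sum_n log_tGamma_factor N).
Proof.
  induction N as [|N IH].
  - rewrite sum_O. simpl. rewrite Rmult_1_l. apply tGamma_factor_succ.
  - change (tGamma_pprod q (S N) * tGamma_factor q (S (S N))
            = exp (sum_n log_tGamma_factor (S N))).
    rewrite IH, tGamma_factor_succ, sum_Sn, <- exp_plus. reflexivity.
Qed.

Lemma is_series_log_tGamma_factor (j : nat) :
  is_series (fun n => ln1p_term (S n) q * zetaE_term (n + 2) j) (log_tGamma_factor j).
Proof.
  apply (is_series_ext (fun n => (-1) ^ j * ln1p_term (S n) (q / INR (S j)))).
  - intro n.
    change ((-1) ^ j * ln1p_term (S n) (q / INR (S j))
            = ln1p_term (S n) q * zetaE_term (n + 2) j).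
    unfold ln1p_term, zetaE_term.
    replace (S n + 1)%nat with (n + 2)%nat by lia. rewrite Nat.add_1_r.
    assert (0 < INR (S j)) by (apply lt_0_INR; lia).
    unfold Rdiv. rewrite Rpow_mult_distr, pow_inv. ring.
  - exact (is_series_scal_l ((-1) ^ j) _ _ (is_series_ln1p_shift _ (abs_div_succ_lt j))).
Qed.

Definition log_tGamma_prod : R := Series (fun n => ln1p_term (S n) q * zetaE (n + 2)).

Lemma is_lim_seq_sum_n_log_tGamma_factor :
  ex_series (fun n => ln1p_term (S n) q * zetaE (n + 2)) /\
  is_lim_seq (sum_n log_tGamma_factor) log_tGamma_prod.
Proof.
  set (f := fun N n => ln1p_term (S n) q * sum_n (zetaE_term (n + 2)) N).
  assert (hf : forall N, is_series (f N) (sum_n log_tGamma_factor N)).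
  { intro N.
    apply (is_series_ext (fun n => sum_n (fun j => ln1p_term (S n) q * zetaE_term (n + 2) j) N)).
    - intro n. exact (sum_n_mult_l _ _ _).
    - apply is_series_sum_n, is_series_log_tGamma_factor. }
  destruct (Series_uniform_approx f (fun n => ln1p_term (S n) q * zetaE (n + 2))
              (fun n => Rabs q ^ n) (fun N => 2 / INR (N + 2))) as [hex hlim].
  - intro N. eexists. apply hf.
  - apply ex_series_geom. now rewrite Rabs_Rabsolu.
  - intros N n. unfold f. rewrite <- Rmult_minus_distr_l, Rabs_mult, Rmult_comm.
    apply Rmult_le_compat; try apply Rabs_pos.
    + rewrite Rabs_minus_sym. apply zetaE_sub_sum_n_abs_le. lia.
    + apply ln1p_term_succ_abs_le. lra.
  - replace 0 with (2 * 0) by ring.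
    apply (is_lim_seq_scal_l (fun N => / INR (N + 2)) 2 0), is_lim_seq_inv_INR_add.
  - split; [exact hex|].
    apply (is_lim_seq_ext _ _ _ (fun N => is_series_unique _ _ (hf N)) hlim).
Qed.

Lemma is_lim_seq_tGamma_pprod : is_lim_seq (tGamma_pprod q) (exp log_tGamma_prod).
Proof.
  apply is_lim_seq_incr_1.
  apply (is_lim_seq_ext (fun N => exp (sum_n log_tGamma_factor N))).
  - intro N. symmetry. apply tGamma_pprod_succ.
  - apply is_lim_seq_continuous; [apply derivable_continuous_pt, derivable_pt_exp|].
    apply is_lim_seq_sum_n_log_tGamma_factor.
Qed.

End LogFactors.

Theorem corollary3p13 (q : R) (hq0 : 0 < q) (hq1 : q < 1) :
  ex_finite_lim_seq (tGamma_pprod q) /\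
  is_series
    (fun n : nat => (-1) ^ (n + 1) * zetaE (n + 2) / INR (n + 2) * q ^ (n + 2))
    (ln (tGamma q) - (- ln q + gamma0t * q)).
Proof.
  assert (hq : Rabs q < 1) by (rewrite Rabs_right; lra).
  pose proof (is_lim_seq_tGamma_pprod q hq) as hlim.
  split; [now exists (exp (log_tGamma_prod q))|].
  assert (hprod : tGamma_prod q = exp (log_tGamma_prod q)).
  { unfold tGamma_prod. now rewrite (is_lim_seq_unique _ _ hlim). }
  assert (hln : ln (tGamma q) = - ln q + gamma0t * q + log_tGamma_prod q).
  { unfold tGamma. rewrite hprod, !ln_mult, ln_Rinv, !ln_exp; try lra;
      auto using exp_pos, Rinv_0_lt_compat, Rmult_lt_0_compat. }
  rewrite hln. replace (_ - _) with (log_tGamma_prod q) by ring.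
  apply (is_series_ext (fun n => ln1p_term (S n) q * zetaE (n + 2))).
  - intro n.
    change (ln1p_term (S n) q * zetaE (n + 2)
            = (-1) ^ (n + 1) * zetaE (n + 2) / INR (n + 2) * q ^ (n + 2)).
    unfold ln1p_term. replace (S n + 1)%nat with (n + 2)%nat by lia.
    rewrite Nat.add_1_r. unfold Rdiv. ring.
  - apply Series_correct, (is_lim_seq_sum_n_log_tGamma_factor q hq).
Qed.
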